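(* Let $c>0$ and let $f$ be a critical point of the free energy $F$ for one of the four kernels below, i.e. $f(P)=Z^{-1}\exp(-W(P))$ with $Z=\int e^{-W}d\nu$ and $W(P)=\int cG(P,P')f(P')\,d\nu(P')$, so that $$W(P)=c_1\,\bm p\cdot\bm m_1+(c_2Q_1+c_4Q_2):\bm m_1\bm m_1^T+(c_3Q_2+c_4Q_1):\bm m_2\bm m_2^T$$ (with the appropriate coefficients equal to zero). Let $R\in SO(3)$. Then: (a) For the $D_{\infty h}$ kernel $cG=c_2p_{11}^2$: $D_{\infty h}\subseteq R\mathcal J_fR^T$ if and only if $RQ_1R^T$ is diagonal with $(RQ_1R^T)_{22}=(RQ_1R^T)_{33}$. (b) For the $C_{\infty v}$ kernel $cG=c_1p_{11}+c_2p_{11}^2$: $C_{\infty v}\subseteq R\mathcal J_fR^T$ if and only if $RQ_1R^T$ is diagonal with $(RQ_1R^T)_{22}=(RQ_1R^T)_{33}$ and $(R\bm p)_2=(R\bm p)_3=0$. (c) For the $D_{2h}$ kernel $cG=c_2p_{11}^2+c_3p_{22}^2+c_4(p_{12}^2+p_{21}^2)$: $D_{2h}\subseteq R\mathcal J_fR^T$ if and only if both $RQ_1R^T$ and $RQ_2R^T$ are diagonal. (d) For the $C_{2v}$ kernel $cG=c_1p_{11}+c_2p_{11}^2+c_3p_{22}^2+c_4(p_{12}^2+p_{21}^2)$: $C_{2v}\subseteq R\mathcal J_fR^T$ if and only if $RQ_1R^T$ and $RQ_2R^T$ are diagonal and $(R\bm p)_2=(R\bm p)_3=0$.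
   Context: Orientations are $P\in SO(3)$ with body frame $\bm m_i(P)=P\bm e_i$ (columns of $P$); $\nu$ is the normalized Haar measure on $SO(3)$; $p_{ij}=\bm m_i(P)\cdot\bm m_j(P')$. The free energy of a probability density $f$ on $SO(3)$ is $F[f]=\int f\log f\,d\nu+\frac12\iint f(P)cG(P,P')f(P')\,d\nu\,d\nu$. Moments: $\bm p=\langle\bm m_1\rangle$, $Q_1=\langle\bm m_1\bm m_1^T\rangle$, $Q_2=\langle\bm m_2\bm m_2^T\rangle$ with $\langle u\rangle=\int uf\,d\nu$; $A:B=\mathrm{tr}(A^TB)$. Point groups (rotation axis along the first coordinate): with $R_1=\mathrm{diag}(1,-1,-1)$, $R_2=\mathrm{diag}(-1,1,-1)$, $R_3=\mathrm{diag}(-1,-1,1)$, $J_3=\mathrm{diag}(1,1,-1)$, $D_{\infty h}=D_\infty\cup D_\infty J_3$ where $D_\infty=\left\{\begin{pmatrix}\pm1&0&0\\0&\pm\cos\theta&-\sin\theta\\0&\pm\sin\theta&\cos\theta\end{pmatrix}\right\}$ (signs taken together, $\theta\in\mathbb R$); $C_{\infty v}=C_\infty\cup C_\infty J_3$ where $C_\infty=\left\{\begin{pmatrix}1&0&0\\0&\cos\theta&-\sin\theta\\0&\sin\theta&\cos\theta\end{pmatrix}\right\}$; $D_{2h}=\{I,R_1,R_2,R_3\}\cup\{J_3,J_3R_1,J_3R_2,J_3R_3\}$; $C_{2v}=\{I,R_1\}\cup\{J_3,J_3R_1\}$. For each kernel, the molecular symmetry group $\mathcal H$ is the group with the same name ($D_{\infty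 h}$, $C_{\infty v}$, $D_{2h}$, $C_{2v}$ respectively), and $\mathcal H^-$ denotes its elements of determinant $-1$. The phase symmetry group $\mathcal J_f$ is the set of $T\in O(3)$ such that: if $\det T=1$ then $f(TP)=f(P)$ for all $P\in SO(3)$; if $\det T=-1$ then $f(TPJ)=f(P)$ for all $P\in SO(3)$ and all $J\in\mathcal H^-$. *)

From Stdlib Require Import Reals.
Open Scope R_scope.

Inductive idx : Type := i1 | i2 | i3.
Definition M3 := idx -> idx -> R.
Definition V3 := idx -> R.

Definition sum3 (g : idx -> R) : R := g i1 + g i2 + g i3.
Definition mmul (A B : M3) : M3 := fun i j => sum3 (fun k => A i k * B k j).
Definition tr (A : M3) : M3 := fun i j => A j i.
Definition mvec (A : M3) (v : V3) : V3 := fun i => sum3 (fun k => A i k * v k).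
Definition delta (i j : idx) : R :=
  match i, j with i1, i1 | i2, i2 | i3, i3 => 1 | _, _ => 0 end.
Definition Id3 : M3 := delta.
Definition det (A : M3) : R :=
  A i1 i1 * (A i2 i2 * A i3 i3 - A i2 i3 * A i3 i2)
  - A i1 i2 * (A i2 i1 * A i3 i3 - A i2 i3 * A i3 i1)
  + A i1 i3 * (A i2 i1 * A i3 i2 - A i2 i2 * A i3 i1).

Definition mk3 (a11 a12 a13 a21 a22 a23 a31 a32 a33 : R) : M3 :=
  fun i j => match i, j with
  | i1, i1 => a11 | i1, i2 => a12 | i1, i3 => a13
  | i2, i1 => a21 | i2, i2 => a22 | i2, i3 => a23
  | i3, i1 => a31 | i3, i2 => a32 | i3, i3 => a33 end.

Definition orth (A : M3) : Prop := forall i j, mmul (tr A) A i j = delta i j.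
Definition O3 (A : M3) : Prop := orth A.
Definition SO3 (A : M3) : Prop := orth A /\ det A = 1.

Definition diagonal (A : M3) : Prop := forall i j, i <> j -> A i j = 0.
Definition conjR (R0 A : M3) : M3 := mmul (mmul R0 A) (tr R0).

(* body frame m_i(P) = P e_i (i-th column), p_ij = m_i(P).m_j(P') *)
Definition pij (i j : idx) (P P' : M3) : R := sum3 (fun k => P k i * P' k j).

Definition contSO3 (g : M3 -> R) : Prop :=
  forall P, SO3 P -> forall eps, 0 < eps -> exists dlt, 0 < dlt /\
    forall P', SO3 P' -> (forall i j, Rabs (P i j - P' i j) < dlt) ->
      Rabs (g P - g P') < eps.

(* I is the normalized Haar integral on continuous functions on SO(3):
   a positive, linear, normalized, left- and right-invariant functional on
   C(SO(3)) (these properties characterize the Haar integral uniquely). *)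
Definition haar (I : (M3 -> R) -> R) : Prop :=
  (forall g h, contSO3 g -> contSO3 h -> I (fun P => g P + h P) = I g + I h) /\
  (forall a g, contSO3 g -> I (fun P => a * g P) = a * I g) /\
  (forall g, contSO3 g -> (forall P, SO3 P -> 0 <= g P) -> 0 <= I g) /\
  I (fun _ => 1) = 1 /\
  (forall g T, contSO3 g -> SO3 T -> I (fun P => g (mmul T P)) = I g) /\
  (forall g T, contSO3 g -> SO3 T -> I (fun P => g (mmul P T)) = I g).

Definition Wpot (I : (M3 -> R) -> R) (cG : M3 -> M3 -> R) (f : M3 -> R) (P : M3) : R :=
  I (fun P' => cG P P' * f P').
Definition critical (I : (M3 -> R) -> R) (cG : M3 -> M3 -> R) (f : M3 -> R) : Prop :=
  contSO3 f /\
  forall P, SO3 P ->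
    f P = exp (- Wpot I cG f P) / I (fun P0 => exp (- Wpot I cG f P0)).

Definition pmom (I : (M3 -> R) -> R) (f : M3 -> R) : V3 :=
  fun k => I (fun P => P k i1 * f P).
Definition Qmom (I : (M3 -> R) -> R) (f : M3 -> R) (a : idx) : M3 :=
  fun k l => I (fun P => P k a * P l a * f P).
Definition Q1 I f := Qmom I f i1.
Definition Q2 I f := Qmom I f i2.

Definition ker_Dinfh (c2 : R) : M3 -> M3 -> R :=
  fun P P' => c2 * (pij i1 i1 P P') ^ 2.
Definition ker_Cinfv (c1 c2 : R) : M3 -> M3 -> R :=
  fun P P' => c1 * pij i1 i1 P P' + c2 * (pij i1 i1 P P') ^ 2.
Definition ker_D2h (c2 c3 c4 : R) : M3 -> M3 -> R :=
  fun P P' => c2 * (pij i1 i1 P P') ^ 2 + c3 * (pij i2 i2 P P') ^ 2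
              + c4 * ((pij i1 i2 P P') ^ 2 + (pij i2 i1 P P') ^ 2).
Definition ker_C2v (c1 c2 c3 c4 : R) : M3 -> M3 -> R :=
  fun P P' => c1 * pij i1 i1 P P' + c2 * (pij i1 i1 P P') ^ 2
              + c3 * (pij i2 i2 P P') ^ 2
              + c4 * ((pij i1 i2 P P') ^ 2 + (pij i2 i1 P P') ^ 2).

Definition R1m : M3 := mk3 1 0 0 0 (-1) 0 0 0 (-1).
Definition R2m : M3 := mk3 (-1) 0 0 0 1 0 0 0 (-1).
Definition R3m : M3 := mk3 (-1) 0 0 0 (-1) 0 0 0 1.
Definition J3m : M3 := mk3 1 0 0 0 1 0 0 0 (-1).

Definition Dinf (T : M3) : Prop :=
  exists s th, (s = 1 \/ s = -1) /\
    T = mk3 s 0 0 0 (s * cos th) (- sin th) 0 (s * sin th) (cos th).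
Definition Cinf (T : M3) : Prop :=
  exists th, T = mk3 1 0 0 0 (cos th) (- sin th) 0 (sin th) (cos th).
Definition Dinfh (T : M3) : Prop :=
  Dinf T \/ exists S, Dinf S /\ T = mmul S J3m.
Definition Cinfv (T : M3) : Prop :=
  Cinf T \/ exists S, Cinf S /\ T = mmul S J3m.
Definition D2 (T : M3) : Prop := T = Id3 \/ T = R1m \/ T = R2m \/ T = R3m.
Definition D2h (T : M3) : Prop := D2 T \/ exists S, D2 S /\ T = mmul J3m S.
Definition C2 (T : M3) : Prop := T = Id3 \/ T = R1m.
Definition C2v (T : M3) : Prop := C2 T \/ exists S, C2 S /\ T = mmul J3m S.

(* Phase symmetry group J_f (relative to the molecular group H) *)
Definition Jf (H : M3 -> Prop) (f : M3 -> R) (T : M3) : Prop :=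
  O3 T /\
  (det T = 1 -> forall P, SO3 P -> f (mmul T P) = f P) /\
  (det T = -1 -> forall P J, SO3 P -> H J -> det J = -1 ->
      f (mmul (mmul T P) J) = f P).

(* G ⊆ R J R^T  iff  R^T T R ∈ J for all T ∈ G *)
Definition sub_conj (G : M3 -> Prop) (J : M3 -> Prop) (R0 : M3) : Prop :=
  forall T, G T -> J (mmul (mmul (tr R0) T) R0).

(* The critical point [f] is a function of [W], and [W(P)] depends on [P] only through the
   body axes [m1 = P e1], [m2 = P e2] and the moments [p], [Q1], [Q2]. On the other hand, by
   the bi-invariance of the Haar integral, any symmetry [f (S P Rt) = f P] with
   [Rt e_a = +-e_a] fixes the moments: [S Qa S^T = Qa] and [S p = +-p]. Hence the phase
   symmetry [S = R^T T R] attached to [T] fixes the moments, and [T] fixes [R Qa R^T] and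
   [R p]. Invariance under [R1 = diag(1,-1,-1)] and [J3] forces [R Qa R^T] diagonal and
   [(R p)_2 = (R p)_3 = 0]; invariance under the quarter turn about [e1] forces
   [(R Q1 R^T)_22 = (R Q1 R^T)_33]. For the converse, such moments are fixed by every
   element of the group, which leaves [W], hence [f], invariant. *)

From Stdlib Require Import Reals Lra FunctionalExtensionality.
Open Scope R_scope.

Ltac mx_ext :=
  let i := fresh "i" in let j := fresh "j" in
  extensionality i; extensionality j; destruct i, j;
  unfold conjR, mmul, tr, sum3, Id3, delta, mk3, R1m, R2m, R3m, J3m; simpl; ring.

Lemma mmul_assoc A B C : mmul (mmul A B) C = mmul A (mmul B C).
Proof. mx_ext. Qed.

Lemma mmul_1l A : mmul Id3 A = A.
Proof. mx_ext. Qed.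

Lemma mmul_1r A : mmul A Id3 = A.
Proof. mx_ext. Qed.

Lemma tr_mmul A B : tr (mmul A B) = mmul (tr B) (tr A).
Proof. mx_ext. Qed.

Lemma det_mmul A B : det (mmul A B) = det A * det B.
Proof. unfold det, mmul, sum3. ring. Qed.

Lemma det_tr A : det (tr A) = det A.
Proof. unfold det, tr. ring. Qed.

Lemma orthE A : orth A <-> mmul (tr A) A = Id3.
Proof.
  split; intro H.
  - extensionality i; extensionality j. apply H.
  - intros i j. rewrite H. reflexivity.
Qed.

Lemma orth_mmul A B : orth A -> orth B -> orth (mmul A B).
Proof.
  rewrite !orthE. intros HA HB.
  rewrite tr_mmul, mmul_assoc, <- (mmul_assoc (tr A)), HA, mmul_1l. exact HB.
Qed.

Lemma orth_det A : orth A -> det A = 1 \/ det A = -1.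
Proof.
  rewrite orthE. intro H.
  assert (D : det A * det A = 1).
  { rewrite <- det_tr at 1. rewrite <- det_mmul, H. unfold det, Id3, delta; simpl; ring. }
  destruct (Rle_or_lt 0 (det A)); [left | right]; nra.
Qed.

Lemma SO3_mmul A B : SO3 A -> SO3 B -> SO3 (mmul A B).
Proof.
  intros [HA DA] [HB DB]. split; [now apply orth_mmul|].
  rewrite det_mmul, DA, DB. ring.
Qed.

Lemma SO3_Id3 : SO3 Id3.
Proof. split; [apply orthE; mx_ext | unfold det, Id3, delta; simpl; ring]. Qed.

Definition adj (A : M3) : M3 := mk3
  (A i2 i2 * A i3 i3 - A i2 i3 * A i3 i2) (A i1 i3 * A i3 i2 - A i1 i2 * A i3 i3)
  (A i1 i2 * A i2 i3 - A i1 i3 * A i2 i2)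
  (A i2 i3 * A i3 i1 - A i2 i1 * A i3 i3) (A i1 i1 * A i3 i3 - A i1 i3 * A i3 i1)
  (A i1 i3 * A i2 i1 - A i1 i1 * A i2 i3)
  (A i2 i1 * A i3 i2 - A i2 i2 * A i3 i1) (A i1 i2 * A i3 i1 - A i1 i1 * A i3 i2)
  (A i1 i1 * A i2 i2 - A i1 i2 * A i2 i1).

Lemma mmul_adj A : det A = 1 -> mmul A (adj A) = Id3.
Proof.
  intro D. extensionality i; extensionality j; destruct i, j;
  unfold mmul, adj, sum3, Id3, delta, mk3; simpl;
  first [ring | rewrite <- D; unfold det; ring].
Qed.

(* A left inverse of [A] equals its right inverse [adj A]. *)
Lemma SO3_mmul_tr A : SO3 A -> mmul A (tr A) = Id3.
Proof.
  intros [HO D]. apply orthE in HO.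
  replace (tr A) with (adj A); [now apply mmul_adj|].
  rewrite <- (mmul_1l (adj A)), <- HO, mmul_assoc, mmul_adj, mmul_1r; auto.
Qed.

Lemma orth_entry_le1 A i j : orth A -> Rabs (A i j) <= 1.
Proof.
  intro H. specialize (H j j). unfold mmul, tr, sum3 in H.
  apply Rabs_le. destruct i, j; simpl in H; split; nra.
Qed.

Lemma conjR_mmul X Y Q : conjR X (conjR Y Q) = conjR (mmul X Y) Q.
Proof. mx_ext. Qed.

Lemma conjR_Id3 Q : conjR Id3 Q = Q.
Proof. mx_ext. Qed.

Lemma mvec_mmul X Y v : mvec X (mvec Y v) = mvec (mmul X Y) v.
Proof. extensionality i. unfold mvec, mmul, sum3. ring. Qed.

Lemma mvec_Id3 v : mvec Id3 v = v.
Proof. extensionality i. destruct i; unfold mvec, Id3, delta, sum3; simpl; ring. Qed.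
Lemma cont_const c : contSO3 (fun _ => c).
Proof.
  intros P _ eps He. exists 1. split; [lra|]. intros.
  rewrite Rminus_diag, Rabs_R0. exact He.
Qed.

Lemma cont_entry i j : contSO3 (fun P => P i j).
Proof. intros P _ eps He. exists eps. split; [exact He|]. intros P' _ H. apply H. Qed.

Lemma cont_ext g h : contSO3 g -> (forall P, SO3 P -> g P = h P) -> contSO3 h.
Proof.
  intros Hg E P HP eps He. destruct (Hg P HP eps He) as [d [Hd H]].
  exists d; split; [exact Hd|]. intros P' HP' Hc. rewrite <- !E by assumption. auto.
Qed.

Lemma cont_plus g h : contSO3 g -> contSO3 h -> contSO3 (fun P => g P + h P).
Proof.
  intros Hg Hh P HP eps He.
  destruct (Hg P HP (eps/2)) as [d1 [Hd1 H1]]; [lra|].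
  destruct (Hh P HP (eps/2)) as [d2 [Hd2 H2]]; [lra|].
  exists (Rmin d1 d2). split; [now apply Rmin_pos|]. intros P' HP' Hc.
  specialize (H1 P' HP' (fun i j => Rlt_le_trans _ _ _ (Hc i j) (Rmin_l _ _))).
  specialize (H2 P' HP' (fun i j => Rlt_le_trans _ _ _ (Hc i j) (Rmin_r _ _))).
  replace (g P + h P - (g P' + h P')) with ((g P - g P') + (h P - h P')) by ring.
  eapply Rle_lt_trans; [apply Rabs_triang|]. lra.
Qed.

(* [g P h P - g P' h P' = g P (h P - h P') + (g P - g P') h P'], with [|h P'| <= |h P| + 1]. *)
Lemma cont_mul g h : contSO3 g -> contSO3 h -> contSO3 (fun P => g P * h P).
Proof.
  intros Hg Hh P HP eps He.
  set (a := Rabs (g P)). set (b := Rabs (h P)).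
  assert (Ha : 0 <= a) by apply Rabs_pos. assert (Hb : 0 <= b) by apply Rabs_pos.
  destruct (Hg P HP (eps / (2 * (b + 1)))) as [d1 [Hd1 H1]].
  { apply Rdiv_lt_0_compat; lra. }
  destruct (Hh P HP (Rmin 1 (eps / (2 * (a + 1))))) as [d2 [Hd2 H2]].
  { apply Rmin_pos; [lra | apply Rdiv_lt_0_compat; lra]. }
  exists (Rmin d1 d2). split; [now apply Rmin_pos|]. intros P' HP' Hc.
  specialize (H1 P' HP' (fun i j => Rlt_le_trans _ _ _ (Hc i j) (Rmin_l _ _))).
  specialize (H2 P' HP' (fun i j => Rlt_le_trans _ _ _ (Hc i j) (Rmin_r _ _))).
  pose proof (Rlt_le_trans _ _ _ H2 (Rmin_l _ _)) as Hh1.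
  pose proof (Rlt_le_trans _ _ _ H2 (Rmin_r _ _)) as Hh2.
  assert (Bh : Rabs (h P') <= b + 1).
  { replace (h P') with (h P - (h P - h P')) by ring.
    eapply Rle_trans; [apply Rabs_triang|]. rewrite Rabs_Ropp. fold b. lra. }
  replace (g P * h P - g P' * h P') with (g P * (h P - h P') + (g P - g P') * h P')
    by ring.
  eapply Rle_lt_trans; [apply Rabs_triang|]. rewrite !Rabs_mult. fold a.
  assert (C1 : a * Rabs (h P - h P') <= a * (eps / (2 * (a + 1))))
    by (apply Rmult_le_compat_l; lra).
  assert (C2 : a * (eps / (2 * (a + 1))) < eps / 2).
  { apply Rmult_lt_reg_r with (2 * (a + 1)); [lra|]. field_simplify; [nra | lra]. }
  assert (C3 : Rabs (g P - g P') * Rabs (h P') <= eps / (2 * (b + 1)) * (b + 1))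
    by (apply Rmult_le_compat; try apply Rabs_pos; lra).
  replace (eps / (2 * (b + 1)) * (b + 1)) with (eps / 2) in C3 by (field; lra).
  lra.
Qed.

Lemma cont_sum3 (F : idx -> M3 -> R) :
  (forall k, contSO3 (F k)) -> contSO3 (fun P => sum3 (fun k => F k P)).
Proof. intro H. unfold sum3. repeat apply cont_plus; auto. Qed.

Ltac cont_auto := repeat first
  [ assumption | apply cont_plus | apply cont_mul | apply cont_entry | apply cont_const
  | apply cont_sum3; intro
  | match goal with H : forall _, contSO3 _ |- _ => apply H end
  | match goal with H : forall _ _, contSO3 _ |- _ => apply H end ].

Lemma sum3_close (a x y : idx -> R) d :
  (forall k, Rabs (a k) <= 1) -> (forall k, Rabs (x k - y k) < d) ->
  Rabs (sum3 (fun k => a k * x k) - sum3 (fun k => a k * y k)) < 3 * d.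
Proof.
  intros Ha Hxy.
  assert (T : forall k, Rabs (a k * x k - a k * y k) < d).
  { intro k. replace (a k * x k - a k * y k) with (a k * (x k - y k)) by ring.
    rewrite Rabs_mult. specialize (Ha k). specialize (Hxy k).
    pose proof (Rabs_pos (x k - y k)). nra. }
  unfold sum3.
  replace (a i1 * x i1 + a i2 * x i2 + a i3 * x i3 - (a i1 * y i1 + a i2 * y i2 + a i3 * y i3))
    with ((a i1 * x i1 - a i1 * y i1) + (a i2 * x i2 - a i2 * y i2)
          + (a i3 * x i3 - a i3 * y i3)) by ring.
  pose proof (T i1); pose proof (T i2); pose proof (T i3).
  eapply Rle_lt_trans; [apply Rabs_triang|].
  eapply Rle_lt_trans; [apply Rplus_le_compat_r; apply Rabs_triang|]. lra.
Qed.

Lemma cont_mmul_l g L : contSO3 g -> SO3 L -> contSO3 (fun P => g (mmul L P)).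
Proof.
  intros Hg HL P HP eps He.
  destruct (Hg (mmul L P) (SO3_mmul _ _ HL HP) eps He) as [d [Hd H]].
  exists (d / 3). split; [lra|]. intros P' HP' Hc.
  apply H; [now apply SO3_mmul|]. intros i j.
  replace d with (3 * (d / 3)) by field.
  apply sum3_close; intro k; [apply orth_entry_le1, HL | apply Hc].
Qed.

Lemma cont_mmul_r g L : contSO3 g -> SO3 L -> contSO3 (fun P => g (mmul P L)).
Proof.
  intros Hg HL P HP eps He.
  destruct (Hg (mmul P L) (SO3_mmul _ _ HP HL) eps He) as [d [Hd H]].
  exists (d / 3). split; [lra|]. intros P' HP' Hc.
  apply H; [now apply SO3_mmul|]. intros i j.
  replace d with (3 * (d / 3)) by field. unfold mmul.
  replace (sum3 (fun k => P i k * L k j)) with (sum3 (fun k => L k j * P i k))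
    by (unfold sum3; ring).
  replace (sum3 (fun k => P' i k * L k j)) with (sum3 (fun k => L k j * P' i k))
    by (unfold sum3; ring).
  apply sum3_close; intro k; [apply orth_entry_le1, HL | apply Hc].
Qed.

Lemma cont_mmul_lr g L Rt : contSO3 g -> SO3 L -> SO3 Rt ->
  contSO3 (fun P => g (mmul (mmul L P) Rt)).
Proof.
  intros Hg HL HRt. apply (cont_mmul_l (fun X => g (mmul X Rt))); [|exact HL].
  now apply cont_mmul_r.
Qed.

Section Haar.

Variable I : (M3 -> R) -> R.
Hypothesis HI : haar I.

Lemma haar_add g h : contSO3 g -> contSO3 h -> I (fun P => g P + h P) = I g + I h.
Proof. apply HI. Qed.

Lemma haar_scal a g : contSO3 g -> I (fun P => a * g P) = a * I g.
Proof. apply HI. Qed.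

Lemma haar_ext g h : contSO3 g -> (forall P, SO3 P -> g P = h P) -> I g = I h.
Proof.
  intros Hg E. assert (Hh : contSO3 h) by (eapply cont_ext; eauto).
  destruct HI as [_ [_ [Hpos _]]].
  assert (Hd : contSO3 (fun P => g P + -1 * h P)) by cont_auto.
  assert (D : I (fun P => g P + -1 * h P) = I g - I h).
  { rewrite haar_add, haar_scal by cont_auto. ring. }
  assert (D1 : 0 <= I (fun P => g P + -1 * h P)).
  { apply Hpos; [exact Hd|]. intros P HP. rewrite E by exact HP. lra. }
  assert (D2 : 0 <= I (fun P => -1 * (g P + -1 * h P))).
  { apply Hpos; [cont_auto|]. intros P HP. rewrite E by exact HP. lra. }
  rewrite haar_scal in D2 by exact Hd. lra.
Qed.

Lemma haar_sum3 (a : idx -> R) (G : idx -> M3 -> R) :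
  (forall k, contSO3 (G k)) ->
  I (fun P => sum3 (fun k => a k * G k P)) = sum3 (fun k => a k * I (G k)).
Proof.
  intro H. unfold sum3.
  rewrite !haar_add, !haar_scal by cont_auto. reflexivity.
Qed.

Lemma haar_sum33 (a : idx -> idx -> R) (G : idx -> idx -> M3 -> R) :
  (forall k l, contSO3 (G k l)) ->
  I (fun P => sum3 (fun k => sum3 (fun l => a k l * G k l P))) =
  sum3 (fun k => sum3 (fun l => a k l * I (G k l))).
Proof.
  intro H. unfold sum3 at 1 3.
  rewrite !haar_add by cont_auto.
  rewrite !(haar_sum3 (a _)) by auto. reflexivity.
Qed.

Lemma haar_mmul_invariant g L Rt : contSO3 g -> SO3 L -> SO3 Rt ->
  I (fun P => g (mmul (mmul L P) Rt)) = I g.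
Proof.
  intros Hg HL HRt. destruct HI as [_ [_ [_ [_ [HLi HRi]]]]].
  rewrite (HLi (fun X => g (mmul X Rt)) L); [now apply HRi | now apply cont_mmul_r | exact HL].
Qed.

End Haar.

Definition col (P : M3) (a : idx) : V3 := fun k => P k a.
Definition vscal (e : R) (u : V3) : V3 := fun k => e * u k.

Definition signed_axis (J : M3) (a : idx) (e : R) : Prop := forall k, J k a = e * delta k a.

Definition dotv (u v : V3) : R := sum3 (fun k => u k * v k).
Definition quad (A : M3) (u : V3) : R := sum3 (fun k => sum3 (fun l => u k * u l * A k l)).

(* The potential [W] of the [C2v] kernel as a function of the body axes [u = m1], [v = m2]. *)
Definition Wcols (c1 c2 c3 c4 : R) (p : V3) (Q1 Q2 : M3) (u v : V3) : R :=
  c1 * dotv u p + c2 * quad Q1 u + c3 * quad Q2 v + c4 * (quad Q2 u + quad Q1 v).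

Lemma signed_axis_Id3 a : signed_axis Id3 a 1.
Proof. intro k. destruct a, k; unfold Id3, delta; simpl; ring. Qed.

Lemma col_mmul X P a : col (mmul X P) a = mvec X (col P a).
Proof. reflexivity. Qed.

Lemma col_mmul_signed_axis X J a e :
  signed_axis J a e -> col (mmul X J) a = vscal e (col X a).
Proof.
  intro HJ. extensionality k. unfold col, vscal, mmul, sum3. rewrite !HJ.
  destruct a; simpl; ring.
Qed.

Section Moments.

Variable I : (M3 -> R) -> R.
Hypothesis HI : haar I.
Variable f : M3 -> R.
Hypothesis Hf : contSO3 f.

Section Invariance.

Variables L Rt : M3.
Hypothesis HL : SO3 L.
Hypothesis HRt : SO3 Rt.
Hypothesis f_invariant : forall P, SO3 P -> f (mmul (mmul L P) Rt) = f P.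

Let entry_signed_axis a e P k :
  signed_axis Rt a e -> mmul (mmul L P) Rt k a = e * mmul L P k a.
Proof. intro H. exact (f_equal (fun v => v k) (col_mmul_signed_axis _ _ _ _ H)). Qed.

Lemma Qmom_conjR_fixed a e :
  signed_axis Rt a e -> e * e = 1 -> conjR L (Qmom I f a) = Qmom I f a.
Proof.
  intros Ha He. extensionality k; extensionality l.
  transitivity (I (fun P => mmul L P k a * mmul L P l a * f P)).
  { transitivity (sum3 (fun n => sum3 (fun m =>
        (L k n * L l m) * I (fun P => P n a * P m a * f P)))).
    { unfold conjR, mmul, tr, sum3, Qmom. ring. }
    rewrite <- (haar_sum33 I HI) by (auto; intros; cont_auto).
    apply (haar_ext I HI); [cont_auto|]. intros P _. unfold mmul, sum3. ring. }
  transitivity (I (fun P => (fun X => X k a * X l a * f X) (mmul (mmul L P) Rt))).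
  { apply (haar_ext I HI); [unfold mmul; cont_auto|]. intros P HP. cbv beta.
    rewrite !(entry_signed_axis a e) by exact Ha. rewrite f_invariant by exact HP.
    transitivity ((e * e) * (mmul L P k a * mmul L P l a * f P)); [rewrite He|]; ring. }
  apply (haar_mmul_invariant I HI (fun X => X k a * X l a * f X));
    [cont_auto | exact HL | exact HRt].
Qed.

Lemma pmom_mvec_fixed e :
  signed_axis Rt i1 e -> e * e = 1 -> mvec L (pmom I f) = vscal e (pmom I f).
Proof.
  intros Ha He. extensionality k. unfold vscal.
  transitivity (I (fun P => mmul L P k i1 * f P)).
  { transitivity (sum3 (fun n => L k n * I (fun P => P n i1 * f P))); [reflexivity|].
    rewrite <- (haar_sum3 I HI) by (auto; intros; cont_auto).
    apply (haar_ext I HI); [cont_auto|]. intros P _. unfold mmul, sum3. ring. }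
  unfold pmom. rewrite <- (haar_scal I HI) by cont_auto.
  transitivity (I (fun P => e * (fun X => X k i1 * f X) (mmul (mmul L P) Rt))).
  { apply (haar_ext I HI); [unfold mmul; cont_auto|]. intros P HP. cbv beta.
    rewrite (entry_signed_axis i1 e) by exact Ha. rewrite f_invariant by exact HP.
    transitivity ((e * e) * (mmul L P k i1 * f P)); [rewrite He|]; ring. }
  assert (Hg : contSO3 (fun X => X k i1 * f X)) by cont_auto.
  rewrite !(haar_scal I HI e) by (exact Hg || exact (cont_mmul_lr _ _ _ Hg HL HRt)).
  exact (f_equal (Rmult e) (haar_mmul_invariant I HI _ L Rt Hg HL HRt)).
Qed.

End Invariance.

Lemma Wpot_C2v c1 c2 c3 c4 P :
  Wpot I (ker_C2v c1 c2 c3 c4) f P =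
  Wcols c1 c2 c3 c4 (pmom I f) (Q1 I f) (Q2 I f) (col P i1) (col P i2).
Proof.
  unfold Wpot.
  transitivity (I (fun P' =>
     c1 * sum3 (fun k => P k i1 * (P' k i1 * f P'))
   + c2 * sum3 (fun k => sum3 (fun l => (P k i1 * P l i1) * (P' k i1 * P' l i1 * f P')))
   + c3 * sum3 (fun k => sum3 (fun l => (P k i2 * P l i2) * (P' k i2 * P' l i2 * f P')))
   + c4 * (sum3 (fun k => sum3 (fun l => (P k i1 * P l i1) * (P' k i2 * P' l i2 * f P')))
         + sum3 (fun k => sum3 (fun l => (P k i2 * P l i2) * (P' k i1 * P' l i1 * f P')))))).
  { f_equal; extensionality P'; unfold ker_C2v, pij, sum3; ring. }
  rewrite !(haar_add I HI), !(haar_scal I HI), (haar_add I HI) by cont_auto.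
  rewrite !(haar_sum33 I HI), (haar_sum3 I HI) by (intros; cont_auto).
  reflexivity.
Qed.

End Moments.

Lemma critical_eq_of_Wcols I c1 c2 c3 c4 f P P' : haar I ->
  critical I (ker_C2v c1 c2 c3 c4) f -> SO3 P -> SO3 P' ->
  Wcols c1 c2 c3 c4 (pmom I f) (Q1 I f) (Q2 I f) (col P' i1) (col P' i2) =
  Wcols c1 c2 c3 c4 (pmom I f) (Q1 I f) (Q2 I f) (col P i1) (col P i2) ->
  f P' = f P.
Proof.
  intros HI [Hf Hc] HP HP' HW.
  rewrite (Hc P' HP'), (Hc P HP), !(Wpot_C2v I HI f Hf), HW. reflexivity.
Qed.

Lemma quad_vscal_mvec A L u e :
  quad A (vscal e (mvec L u)) = e * e * quad (conjR (tr L) A) u.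
Proof. unfold quad, vscal, conjR, mvec, mmul, tr, sum3. ring. Qed.

Lemma dotv_vscal_mvec L u p e :
  dotv (vscal e (mvec L u)) p = e * dotv u (mvec (tr L) p).
Proof. unfold dotv, vscal, mvec, tr, sum3. ring. Qed.

Lemma conjR_tr_fixed L Q : orth L -> conjR L Q = Q -> conjR (tr L) Q = Q.
Proof.
  rewrite orthE. intros HL HQ.
  rewrite <- HQ at 1. rewrite conjR_mmul, HL. apply conjR_Id3.
Qed.

Lemma mvec_tr_fixed L q : orth L -> mvec L q = q -> mvec (tr L) q = q.
Proof.
  rewrite orthE. intros HL Hq.
  rewrite <- Hq at 1. rewrite mvec_mmul, HL. apply mvec_Id3.
Qed.

Definition mopp (A : M3) : M3 := fun i j => - A i j.

Lemma conjR_mopp A Q : conjR (mopp A) Q = conjR A Q.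
Proof. unfold mopp. mx_ext. Qed.

Lemma SO3_mopp A : orth A -> det A = -1 -> SO3 (mopp A).
Proof.
  rewrite orthE. intros HA DA. split.
  - apply orthE. rewrite <- HA. unfold mopp. mx_ext.
  - revert DA. unfold det, mopp. lra.
Qed.

(* Since [J3 = - R3], a reflection [S] with [f (S P J3) = f P] yields the rotation [-S]
   with [f ((-S) P R3) = f P]. *)
Lemma moments_fixed_of_Jf I G f S : haar I -> contSO3 f -> G J3m -> Jf G f S ->
  conjR S (Q1 I f) = Q1 I f /\ conjR S (Q2 I f) = Q2 I f /\
  mvec S (pmom I f) = pmom I f.
Proof.
  intros HI Hf HJ3 [HO [Hrot Hrefl]].
  destruct (orth_det S HO) as [D | D].
  - assert (HS : SO3 S) by (split; assumption).
    assert (Hinv : forall P, SO3 P -> f (mmul (mmul S P) Id3) = f P)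
      by (intros P HP; rewrite mmul_1r; now apply Hrot).
    split; [|split].
    + apply (Qmom_conjR_fixed I HI f Hf S Id3 HS SO3_Id3 Hinv i1 1); [apply signed_axis_Id3 | ring].
    + apply (Qmom_conjR_fixed I HI f Hf S Id3 HS SO3_Id3 Hinv i2 1); [apply signed_axis_Id3 | ring].
    + rewrite (pmom_mvec_fixed I HI f Hf S Id3 HS SO3_Id3 Hinv 1); [|apply signed_axis_Id3|ring].
      extensionality k. unfold vscal. ring.
  - assert (HS : SO3 (mopp S)) by now apply SO3_mopp.
    assert (HR3 : SO3 R3m) by (split; [apply orthE; mx_ext | unfold det, R3m, mk3; simpl; ring]).
    assert (Hinv : forall P, SO3 P -> f (mmul (mmul (mopp S) P) R3m) = f P).
    { intros P HP.
      replace (mmul (mmul (mopp S) P) R3m) with (mmul (mmul S P) J3m) by (unfold mopp; mx_ext).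
      apply Hrefl; auto. unfold det, J3m, mk3; simpl; ring. }
    assert (Hax : forall a, a <> i3 -> signed_axis R3m a (-1))
      by (intros a Ha k; destruct a, k; unfold R3m, mk3, delta; simpl; try ring; easy).
    rewrite <- !(conjR_mopp S).
    split; [|split].
    + apply (Qmom_conjR_fixed I HI f Hf _ R3m HS HR3 Hinv i1 (-1));
        [apply Hax; discriminate | ring].
    + apply (Qmom_conjR_fixed I HI f Hf _ R3m HS HR3 Hinv i2 (-1));
        [apply Hax; discriminate | ring].
    + assert (Hp : mvec (mopp S) (pmom I f) = vscal (-1) (pmom I f))
        by (apply (pmom_mvec_fixed I HI f Hf _ R3m HS HR3 Hinv); [apply Hax; discriminate | ring]).
      extensionality k. generalize (f_equal (fun v => v k) Hp).
      unfold mvec, vscal, mopp, sum3. lra.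
Qed.

Definition rconj (R0 T : M3) : M3 := mmul (mmul (tr R0) T) R0.

Section Frame.

Variable R0 : M3.
Hypothesis HR : SO3 R0.

Lemma orth_rconj T : orth T -> orth (rconj R0 T).
Proof.
  intro HT. apply orth_mmul; [apply orth_mmul|]; [|exact HT|apply HR].
  apply orthE. exact (SO3_mmul_tr R0 HR).
Qed.

Lemma mmul_rconj T : mmul R0 (rconj R0 T) = mmul T R0.
Proof.
  unfold rconj. rewrite <- !mmul_assoc, (SO3_mmul_tr R0 HR), mmul_1l. reflexivity.
Qed.

Lemma conjR_rconj_fixed T Q :
  conjR (rconj R0 T) Q = Q <-> conjR T (conjR R0 Q) = conjR R0 Q.
Proof.
  pose proof (proj1 (orthE R0) (proj1 HR)) as HR'.
  rewrite conjR_mmul, <- mmul_rconj, <- conjR_mmul. split; intro H.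
  - now rewrite H.
  - rewrite <- (conjR_Id3 Q) at 2. rewrite <- HR', <- conjR_mmul, <- H, !conjR_mmul.
    rewrite HR', mmul_1l. reflexivity.
Qed.

Lemma mvec_rconj_fixed T q :
  mvec (rconj R0 T) q = q <-> mvec T (mvec R0 q) = mvec R0 q.
Proof.
  pose proof (proj1 (orthE R0) (proj1 HR)) as HR'.
  rewrite mvec_mmul, <- mmul_rconj, <- mvec_mmul. split; intro H.
  - now rewrite H.
  - rewrite <- (mvec_Id3 q) at 2. rewrite <- HR', <- mvec_mmul, <- H, !mvec_mmul.
    rewrite HR', mmul_1l. reflexivity.
Qed.

Lemma sub_conj_moments_fixed I G f T : haar I -> contSO3 f -> G J3m ->
  sub_conj G (Jf G f) R0 -> G T ->
  conjR T (conjR R0 (Q1 I f)) = conjR R0 (Q1 I f) /\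
  conjR T (conjR R0 (Q2 I f)) = conjR R0 (Q2 I f) /\
  mvec T (mvec R0 (pmom I f)) = mvec R0 (pmom I f).
Proof.
  intros HI Hf HJ3 Hs HT.
  destruct (moments_fixed_of_Jf I G f (rconj R0 T) HI Hf HJ3 (Hs T HT)) as [E1 [E2 E3]].
  rewrite <- !conjR_rconj_fixed, <- mvec_rconj_fixed. auto.
Qed.

Lemma sub_conj_of_Wcols_invariant I G c1 c2 c3 c4 f : haar I ->
  critical I (ker_C2v c1 c2 c3 c4) f -> G Id3 -> (forall T, G T -> orth T) ->
  (forall T J P, G T -> G J -> SO3 P ->
     let X := mmul (mmul (rconj R0 T) P) J in
     Wcols c1 c2 c3 c4 (pmom I f) (Q1 I f) (Q2 I f) (col X i1) (col X i2) =
     Wcols c1 c2 c3 c4 (pmom I f) (Q1 I f) (Q2 I f) (col P i1) (col P i2)) ->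
  sub_conj G (Jf G f) R0.
Proof.
  intros HI Hc HId Horth HW T HT.
  assert (HS : orth (rconj R0 T)) by now apply orth_rconj, Horth.
  split; [exact HS | split].
  - intros DS P HP. rewrite <- (mmul_1r (mmul _ P)).
    apply (critical_eq_of_Wcols I c1 c2 c3 c4 f P _ HI Hc HP); [|now apply HW].
    rewrite mmul_1r. apply SO3_mmul; [split|]; assumption.
  - intros DS P J HP HJ DJ.
    apply (critical_eq_of_Wcols I c1 c2 c3 c4 f P _ HI Hc HP); [|now apply HW].
    split.
    + apply orth_mmul; [apply orth_mmul|]; [exact HS | apply HP | apply Horth, HJ].
    + rewrite det_mmul, det_mmul, DS, DJ, (proj2 HP). ring.
Qed.

Lemma conjR_tr_rconj_fixed T Q : orth T ->
  conjR T (conjR R0 Q) = conjR R0 Q -> conjR (tr (rconj R0 T)) Q = Q.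
Proof.
  intros HT HQ. apply conjR_tr_fixed; [now apply orth_rconj|]. now apply conjR_rconj_fixed.
Qed.

Lemma mvec_tr_rconj_fixed T q : orth T ->
  mvec T (mvec R0 q) = mvec R0 q -> mvec (tr (rconj R0 T)) q = q.
Proof.
  intros HT Hq. apply mvec_tr_fixed; [now apply orth_rconj|]. now apply mvec_rconj_fixed.
Qed.

End Frame.

Definition vec3 (a b c : R) : V3 := fun i => match i with i1 => a | i2 => b | i3 => c end.
Definition dg (d : V3) : M3 := fun i j => delta i j * d i.

Lemma orth_dg d : (forall i, d i * d i = 1) -> orth (dg d).
Proof.
  intros Hd i j. pose proof (Hd i1); pose proof (Hd i2); pose proof (Hd i3).
  destruct i, j; unfold dg, mmul, tr, sum3, delta; simpl; lra.
Qed.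

Lemma signed_axis_dg d a : signed_axis (dg d) a (d a).
Proof. intro k. unfold dg. destruct k, a; simpl; ring. Qed.

Lemma signed_axis_mmul A B a e e' :
  signed_axis A a e -> signed_axis B a e' -> signed_axis (mmul A B) a (e * e').
Proof.
  intros HA HB k. change (col (mmul A B) a k = e * e' * delta k a).
  rewrite (col_mmul_signed_axis A B a e' HB). unfold vscal, col. rewrite HA. ring.
Qed.

Lemma conjR_dg d A i j : conjR (dg d) A i j = d i * d j * A i j.
Proof. destruct i, j; unfold conjR, dg, mmul, tr, sum3, delta; simpl; ring. Qed.

Lemma conjR_dg_diagonal d A : (forall i, d i * d i = 1) -> diagonal A -> conjR (dg d) A = A.
Proof.
  intros Hd HA. extensionality i; extensionality j. rewrite conjR_dg.
  destruct i, j; try (rewrite Hd; ring); rewrite HA by discriminate; ring.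
Qed.

Lemma conjR_dg_fixed_offdiag d A i j :
  conjR (dg d) A = A -> d i * d j = -1 -> A i j = 0.
Proof.
  intros HA Hd. pose proof (f_equal (fun M => M i j) HA) as E.
  cbv beta in E. rewrite conjR_dg, Hd in E. lra.
Qed.

Lemma mvec_dg d q k : mvec (dg d) q k = d k * q k.
Proof. destruct k; unfold mvec, dg, sum3, delta; simpl; ring. Qed.

Lemma mvec_signed_axis_e1 T q : signed_axis T i1 1 -> q i2 = 0 -> q i3 = 0 -> mvec T q = q.
Proof.
  intros HT H2 H3. extensionality k. unfold mvec, sum3. rewrite HT, H2, H3.
  destruct k; simpl; rewrite ?H2, ?H3; ring.
Qed.

Lemma diagonal_dg A : diagonal A -> A = dg (vec3 (A i1 i1) (A i2 i2) (A i3 i3)).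
Proof.
  intro HA. extensionality i; extensionality j.
  destruct i, j; unfold dg, delta; simpl; try ring; rewrite HA by discriminate; ring.
Qed.

Lemma R1m_dg : R1m = dg (vec3 1 (-1) (-1)).
Proof.
  extensionality i; extensionality j; destruct i, j; unfold R1m, mk3, dg, delta; simpl; ring.
Qed.

Lemma J3m_dg : J3m = dg (vec3 1 1 (-1)).
Proof.
  extensionality i; extensionality j; destruct i, j; unfold J3m, mk3, dg, delta; simpl; ring.
Qed.

Lemma diagonal_of_R1m_J3m_fixed A :
  conjR R1m A = A -> conjR J3m A = A -> (forall i j, A i j = A j i) -> diagonal A.
Proof.
  rewrite R1m_dg, J3m_dg. intros H1 H3 HA.
  assert (A12 : A i1 i2 = 0) by (apply (conjR_dg_fixed_offdiag _ _ _ _ H1); simpl; ring).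
  assert (A13 : A i1 i3 = 0) by (apply (conjR_dg_fixed_offdiag _ _ _ _ H1); simpl; ring).
  assert (A23 : A i2 i3 = 0) by (apply (conjR_dg_fixed_offdiag _ _ _ _ H3); simpl; ring).
  intros i j Hij. destruct i, j; try (exfalso; apply Hij; reflexivity);
    rewrite ?(HA i2 i1), ?(HA i3 i1), ?(HA i3 i2); assumption.
Qed.

Lemma mvec_R1m_fixed q : mvec R1m q = q -> q i2 = 0 /\ q i3 = 0.
Proof.
  rewrite R1m_dg. intro H.
  pose proof (f_equal (fun v => v i2) H) as E2. pose proof (f_equal (fun v => v i3) H) as E3.
  cbv beta in E2, E3. rewrite mvec_dg in E2, E3. simpl in E2, E3. lra.
Qed.

Definition Rt90 : M3 := mk3 1 0 0 0 0 (-1) 0 1 0.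

Lemma conjR_Rt90_fixed A : conjR Rt90 A = A -> A i2 i2 = A i3 i3.
Proof.
  intro H. pose proof (f_equal (fun M => M i2 i2) H) as E.
  unfold conjR, mmul, tr, sum3, Rt90, mk3 in E. simpl in E. lra.
Qed.

Lemma Dinf_conjR T a b : Dinf T -> conjR T (dg (vec3 a b b)) = dg (vec3 a b b).
Proof.
  intros [s [th [Hs ->]]].
  assert (Hc : cos th ^ 2 = 1 - sin th ^ 2) by (rewrite <- (sin2_cos2 th); unfold Rsqr; ring).
  extensionality i; extensionality j;
  destruct Hs as [-> | ->], i, j; unfold conjR, mmul, tr, sum3, mk3, dg, delta; simpl;
  ring_simplify; rewrite ?Hc; ring.
Qed.

Lemma Dinf_orth T : Dinf T -> orth T.
Proof.
  intros [s [th [Hs ->]]] i j.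
  assert (Hc : cos th ^ 2 = 1 - sin th ^ 2) by (rewrite <- (sin2_cos2 th); unfold Rsqr; ring).
  destruct Hs as [-> | ->], i, j; unfold mmul, tr, sum3, mk3, delta; simpl;
  ring_simplify; rewrite ?Hc; ring.
Qed.

Lemma Dinf_signed_axis T : Dinf T -> exists e, e * e = 1 /\ signed_axis T i1 e.
Proof.
  intros [s [th [Hs ->]]]. exists s. split; [destruct Hs as [-> | ->]; ring|].
  intro k. destruct k; unfold mk3, delta; simpl; ring.
Qed.

Lemma Cinf_Dinf T : Cinf T -> Dinf T.
Proof.
  intros [th ->]. exists 1, th. split; [now left|]. rewrite !Rmult_1_l. reflexivity.
Qed.

Lemma Cinf_signed_axis T : Cinf T -> signed_axis T i1 1.
Proof. intros [th ->] k. destruct k; unfold mk3, delta; simpl; ring. Qed.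

Lemma orth_J3m : orth J3m.
Proof. rewrite J3m_dg. apply orth_dg. intro i; destruct i; simpl; ring. Qed.

Lemma signed_axis_J3m : signed_axis J3m i1 1.
Proof. rewrite J3m_dg. exact (signed_axis_dg _ i1). Qed.

Lemma Dinfh_orth T : Dinfh T -> orth T.
Proof.
  intros [HT | [S [HS ->]]]; [now apply Dinf_orth|].
  apply orth_mmul; [now apply Dinf_orth | exact orth_J3m].
Qed.

Lemma Dinfh_signed_axis T : Dinfh T -> exists e, e * e = 1 /\ signed_axis T i1 e.
Proof.
  intros [HT | [S [HS ->]]]; [now apply Dinf_signed_axis|].
  destruct (Dinf_signed_axis S HS) as [e [He HSe]].
  exists (e * 1). split; [rewrite Rmult_1_r; exact He|].
  exact (signed_axis_mmul _ _ _ _ _ HSe signed_axis_J3m).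
Qed.

Lemma Dinfh_conjR T a b : Dinfh T -> conjR T (dg (vec3 a b b)) = dg (vec3 a b b).
Proof.
  intros [HT | [S [HS ->]]]; [now apply Dinf_conjR|].
  rewrite <- conjR_mmul, J3m_dg, conjR_dg_diagonal; [now apply Dinf_conjR| |].
  - intro i; destruct i; simpl; ring.
  - intros i j Hij. unfold dg. destruct i, j; simpl; try ring; now exfalso.
Qed.

Lemma Cinfv_Dinfh T : Cinfv T -> Dinfh T.
Proof.
  intros [HT | [S [HS ->]]]; [left | right; exists S; split]; auto using Cinf_Dinf.
Qed.

Lemma Cinfv_signed_axis T : Cinfv T -> signed_axis T i1 1.
Proof.
  intros [HT | [S [HS ->]]]; [now apply Cinf_signed_axis|].
  rewrite <- (Rmult_1_l 1).
  exact (signed_axis_mmul _ _ _ _ _ (Cinf_signed_axis S HS) signed_axis_J3m).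
Qed.

Ltac dg_witness x y z :=
  let i := fresh "i" in let j := fresh "j" in
  exists (vec3 x y z); repeat split;
  [ intro i; destruct i; simpl; ring | ..
  | extensionality i; extensionality j; destruct i, j;
    unfold mmul, sum3, dg, delta, Id3, R1m, R2m, R3m, J3m, mk3; simpl; ring ].

Lemma D2h_dg T : D2h T -> exists d, (forall i, d i * d i = 1) /\ T = dg d.
Proof.
  intros [H | [S [H ->]]]; repeat destruct H as [-> | H]; try rewrite H;
  [ dg_witness 1 1 1 | dg_witness 1 (-1) (-1) | dg_witness (-1) 1 (-1)
  | dg_witness (-1) (-1) 1 | dg_witness 1 1 (-1) | dg_witness 1 (-1) 1
  | dg_witness (-1) 1 1 | dg_witness (-1) (-1) (-1) ].
Qed.

Lemma C2v_dg T : C2v T -> exists d, (forall i, d i * d i = 1) /\ d i1 = 1 /\ T = dg d.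
Proof.
  intros [H | [S [H ->]]]; repeat destruct H as [-> | H]; try rewrite H;
  [ dg_witness 1 1 1 | dg_witness 1 (-1) (-1) | dg_witness 1 1 (-1) | dg_witness 1 (-1) 1 ].
Qed.

Lemma Cinfv_R1m : Cinfv R1m.
Proof.
  left. exists PI. rewrite cos_PI, sin_PI.
  extensionality i; extensionality j; destruct i, j; unfold R1m, mk3; simpl; ring.
Qed.

Lemma Cinf_Id3 : Cinf Id3.
Proof.
  exists 0. rewrite cos_0, sin_0.
  extensionality i; extensionality j; destruct i, j; unfold Id3, delta, mk3; simpl; ring.
Qed.

Lemma Cinfv_Id3 : Cinfv Id3.
Proof. left. exact Cinf_Id3. Qed.

Lemma Cinfv_J3m : Cinfv J3m.
Proof. right. exists Id3. split; [exact Cinf_Id3 | now rewrite mmul_1l]. Qed.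

Lemma Cinfv_Rt90 : Cinfv Rt90.
Proof.
  left. exists (PI / 2). rewrite cos_PI2, sin_PI2.
  extensionality i; extensionality j; destruct i, j; unfold Rt90, mk3; simpl; ring.
Qed.

Lemma D2h_Id3 : D2h Id3.
Proof. left; left; reflexivity. Qed.

Lemma D2h_R1m : D2h R1m.
Proof. left; right; left; reflexivity. Qed.

Lemma D2h_J3m : D2h J3m.
Proof. right. exists Id3. split; [now left | rewrite mmul_1r; reflexivity]. Qed.

Lemma C2v_Id3 : C2v Id3.
Proof. left; left; reflexivity. Qed.

Lemma C2v_R1m : C2v R1m.
Proof. left; right; reflexivity. Qed.

Lemma C2v_J3m : C2v J3m.
Proof. right. exists Id3. split; [now left | rewrite mmul_1r; reflexivity]. Qed.

Lemma conjR_Qmom_sym R0 I f a i j :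
  conjR R0 (Qmom I f a) i j = conjR R0 (Qmom I f a) j i.
Proof.
  assert (H : forall k l, Qmom I f a k l = Qmom I f a l k)
    by (intros; unfold Qmom; f_equal; extensionality P; ring).
  unfold conjR, mmul, tr, sum3. rewrite (H i2 i1), (H i3 i1), (H i3 i2). ring.
Qed.

Lemma ker_Dinfh_C2v c2 : ker_Dinfh c2 = ker_C2v 0 c2 0 0.
Proof. extensionality P; extensionality P'. unfold ker_Dinfh, ker_C2v. ring. Qed.

Lemma ker_Cinfv_C2v c1 c2 : ker_Cinfv c1 c2 = ker_C2v c1 c2 0 0.
Proof. extensionality P; extensionality P'. unfold ker_Cinfv, ker_C2v. ring. Qed.

Lemma ker_D2h_C2v c2 c3 c4 : ker_D2h c2 c3 c4 = ker_C2v 0 c2 c3 c4.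
Proof. extensionality P; extensionality P'. unfold ker_D2h, ker_C2v. ring. Qed.

Section PhaseSymmetry.

Variable I : (M3 -> R) -> R.
Hypothesis HI : haar I.
Variable R0 : M3.
Hypothesis HR : SO3 R0.
Variable f : M3 -> R.
Hypothesis Hf : contSO3 f.

Let M1 := conjR R0 (Q1 I f).
Let M2 := conjR R0 (Q2 I f).
Let q := mvec R0 (pmom I f).

Lemma sub_conj_diagonal G : G R1m -> G J3m -> sub_conj G (Jf G f) R0 ->
  diagonal M1 /\ diagonal M2 /\ q i2 = 0 /\ q i3 = 0.
Proof.
  intros HR1 HJ3 Hs.
  destruct (sub_conj_moments_fixed R0 HR I G f R1m HI Hf HJ3 Hs HR1) as [A1 [B1 C1]].
  destruct (sub_conj_moments_fixed R0 HR I G f J3m HI Hf HJ3 Hs HJ3) as [A3 [B3 _]].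
  split; [|split]; [apply diagonal_of_R1m_J3m_fixed; auto; apply conjR_Qmom_sym ..|].
  now apply mvec_R1m_fixed.
Qed.

Lemma sub_conj_M1_axial G : G J3m -> G Rt90 -> sub_conj G (Jf G f) R0 -> M1 i2 i2 = M1 i3 i3.
Proof.
  intros HJ3 HRt Hs. apply conjR_Rt90_fixed.
  exact (proj1 (sub_conj_moments_fixed R0 HR I G f Rt90 HI Hf HJ3 Hs HRt)).
Qed.

End PhaseSymmetry.

Section Kernels.

Variable I : (M3 -> R) -> R.
Hypothesis HI : haar I.
Variable R0 : M3.
Hypothesis HR : SO3 R0.

Lemma sub_conj_Dinfh_iff c2 f : critical I (ker_Dinfh c2) f ->
  sub_conj Dinfh (Jf Dinfh f) R0 <->
  diagonal (conjR R0 (Q1 I f)) /\ conjR R0 (Q1 I f) i2 i2 = conjR R0 (Q1 I f) i3 i3.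
Proof.
  rewrite ker_Dinfh_C2v. intro Hc. pose proof (proj1 Hc) as Hf. split.
  - intro Hs. split.
    + apply (sub_conj_diagonal I HI R0 HR f Hf Dinfh);
        auto using Cinfv_Dinfh, Cinfv_R1m, Cinfv_J3m.
    + apply (sub_conj_M1_axial I HI R0 HR f Hf Dinfh);
        auto using Cinfv_Dinfh, Cinfv_J3m, Cinfv_Rt90.
  - intros [Hd Heq].
    apply (sub_conj_of_Wcols_invariant R0 HR I Dinfh 0 c2 0 0 f HI Hc);
      [apply Cinfv_Dinfh, Cinfv_Id3 | exact Dinfh_orth |].
    intros T J P HT HJ HP X. destruct (Dinfh_signed_axis J HJ) as [e [He HJe]].
    unfold X, Wcols. rewrite (col_mmul_signed_axis _ _ _ _ HJe), col_mmul, quad_vscal_mvec.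
    rewrite (conjR_tr_rconj_fixed R0 HR T), He; [ring | now apply Dinfh_orth |].
    rewrite (diagonal_dg _ Hd), <- Heq. now apply Dinfh_conjR.
Qed.

Lemma sub_conj_Cinfv_iff c1 c2 f : critical I (ker_Cinfv c1 c2) f ->
  sub_conj Cinfv (Jf Cinfv f) R0 <->
  (diagonal (conjR R0 (Q1 I f)) /\ conjR R0 (Q1 I f) i2 i2 = conjR R0 (Q1 I f) i3 i3) /\
  mvec R0 (pmom I f) i2 = 0 /\ mvec R0 (pmom I f) i3 = 0.
Proof.
  rewrite ker_Cinfv_C2v. intro Hc. pose proof (proj1 Hc) as Hf. split.
  - intro Hs.
    destruct (sub_conj_diagonal I HI R0 HR f Hf Cinfv Cinfv_R1m Cinfv_J3m Hs) as [Hd [_ Hq]].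
    split; [split|]; [exact Hd | | exact Hq].
    exact (sub_conj_M1_axial I HI R0 HR f Hf Cinfv Cinfv_J3m Cinfv_Rt90 Hs).
  - intros [[Hd Heq] [Hq2 Hq3]].
    apply (sub_conj_of_Wcols_invariant R0 HR I Cinfv c1 c2 0 0 f HI Hc);
      [exact Cinfv_Id3 | intros T HT; now apply Dinfh_orth, Cinfv_Dinfh |].
    intros T J P HT HJ HP X.
    assert (HT' : orth T) by now apply Dinfh_orth, Cinfv_Dinfh.
    assert (HQ : conjR T (conjR R0 (Q1 I f)) = conjR R0 (Q1 I f)).
    { rewrite (diagonal_dg _ Hd), <- Heq. now apply Dinfh_conjR, Cinfv_Dinfh. }
    assert (Hp : mvec T (mvec R0 (pmom I f)) = mvec R0 (pmom I f))
      by (apply mvec_signed_axis_e1; [now apply Cinfv_signed_axis | exact Hq2 | exact Hq3]).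
    unfold X, Wcols. rewrite (col_mmul_signed_axis _ _ _ _ (Cinfv_signed_axis J HJ)), col_mmul.
    rewrite quad_vscal_mvec, dotv_vscal_mvec.
    rewrite (conjR_tr_rconj_fixed R0 HR T _ HT' HQ), (mvec_tr_rconj_fixed R0 HR T _ HT' Hp).
    ring.
Qed.

Lemma sub_conj_D2h_iff c2 c3 c4 f : critical I (ker_D2h c2 c3 c4) f ->
  sub_conj D2h (Jf D2h f) R0 <->
  diagonal (conjR R0 (Q1 I f)) /\ diagonal (conjR R0 (Q2 I f)).
Proof.
  rewrite ker_D2h_C2v. intro Hc. pose proof (proj1 Hc) as Hf. split.
  - intro Hs.
    destruct (sub_conj_diagonal I HI R0 HR f Hf D2h D2h_R1m D2h_J3m Hs) as [Hd1 [Hd2 _]].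
    split; assumption.
  - intros [Hd1 Hd2].
    apply (sub_conj_of_Wcols_invariant R0 HR I D2h 0 c2 c3 c4 f HI Hc D2h_Id3);
      [intros T HT; destruct (D2h_dg T HT) as [d [Hd ->]]; now apply orth_dg |].
    intros T J P HT HJ HP X.
    destruct (D2h_dg T HT) as [d [Hd ->]], (D2h_dg J HJ) as [d' [Hd' ->]].
    unfold X, Wcols. rewrite !(col_mmul_signed_axis _ _ _ _ (signed_axis_dg d' _)), !col_mmul.
    rewrite !quad_vscal_mvec, !(conjR_tr_rconj_fixed R0 HR (dg d)), !Hd';
      auto using orth_dg, conjR_dg_diagonal; ring.
Qed.

Lemma sub_conj_C2v_iff c1 c2 c3 c4 f : critical I (ker_C2v c1 c2 c3 c4) f ->
  sub_conj C2v (Jf C2v f) R0 <->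
  (diagonal (conjR R0 (Q1 I f)) /\ diagonal (conjR R0 (Q2 I f))) /\
  mvec R0 (pmom I f) i2 = 0 /\ mvec R0 (pmom I f) i3 = 0.
Proof.
  intro Hc. pose proof (proj1 Hc) as Hf. split.
  - intro Hs.
    destruct (sub_conj_diagonal I HI R0 HR f Hf C2v C2v_R1m C2v_J3m Hs) as [Hd1 [Hd2 Hq]].
    split; [split|]; assumption.
  - intros [[Hd1 Hd2] [Hq2 Hq3]].
    apply (sub_conj_of_Wcols_invariant R0 HR I C2v c1 c2 c3 c4 f HI Hc C2v_Id3);
      [intros T HT; destruct (C2v_dg T HT) as [d [Hd [_ ->]]]; now apply orth_dg |].
    intros T J P HT HJ HP X.
    destruct (C2v_dg T HT) as [d [Hd [Hd1' ->]]], (C2v_dg J HJ) as [d' [Hd' [Hd1'' ->]]].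
    unfold X, Wcols. rewrite !(col_mmul_signed_axis _ _ _ _ (signed_axis_dg d' _)), !col_mmul.
    rewrite dotv_vscal_mvec, !quad_vscal_mvec, !(conjR_tr_rconj_fixed R0 HR (dg d)), !Hd';
      auto using orth_dg, conjR_dg_diagonal.
    rewrite (mvec_tr_rconj_fixed R0 HR (dg d)), Hd1''; auto using orth_dg; [ring|].
    apply mvec_signed_axis_e1; auto. rewrite <- Hd1'. apply signed_axis_dg.
Qed.

End Kernels.

Theorem lemma1 (I : (M3 -> R) -> R) (HI : haar I) (R0 : M3) (HR : SO3 R0) :
  (forall (c2 : R) (f : M3 -> R), critical I (ker_Dinfh c2) f ->
     (sub_conj Dinfh (Jf Dinfh f) R0 <->
      diagonal (conjR R0 (Q1 I f)) /\
      conjR R0 (Q1 I f) i2 i2 = conjR R0 (Q1 I f) i3 i3)) /\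
  (forall (c1 c2 : R) (f : M3 -> R), critical I (ker_Cinfv c1 c2) f ->
     (sub_conj Cinfv (Jf Cinfv f) R0 <->
      (diagonal (conjR R0 (Q1 I f)) /\
       conjR R0 (Q1 I f) i2 i2 = conjR R0 (Q1 I f) i3 i3) /\
      mvec R0 (pmom I f) i2 = 0 /\ mvec R0 (pmom I f) i3 = 0)) /\
  (forall (c2 c3 c4 : R) (f : M3 -> R), critical I (ker_D2h c2 c3 c4) f ->
     (sub_conj D2h (Jf D2h f) R0 <->
      diagonal (conjR R0 (Q1 I f)) /\ diagonal (conjR R0 (Q2 I f)))) /\
  (forall (c1 c2 c3 c4 : R) (f : M3 -> R), critical I (ker_C2v c1 c2 c3 c4) f ->
     (sub_conj C2v (Jf C2v f) R0 <->
      (diagonal (conjR R0 (Q1 I f)) /\ diagonal (conjR R0 (Q2 I f))) /\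
      mvec R0 (pmom I f) i2 = 0 /\ mvec R0 (pmom I f) i3 = 0)).
Proof.
  split; [|split; [|split]].
  - exact (sub_conj_Dinfh_iff I HI R0 HR).
  - exact (sub_conj_Cinfv_iff I HI R0 HR).
  - exact (sub_conj_D2h_iff I HI R0 HR).
  - exact (sub_conj_C2v_iff I HI R0 HR).
Qed.
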